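(* Let $F$ be an infinite field, let $d$ be a positive integer, and assume that either the characteristic of $F$ does not divide $d$, or $d$ is a prime number equal to the characteristic of $F$. Then every homogeneous form $f(a_1,\dots,a_n)$ of degree $d$ in $n$ variables over $F$ has a finite linearization: there exist a positive integer $m$ and matrices $X_1,\dots,X_n\in M_m(F)$ such that $$(a_1X_1+\dots+a_nX_n)^d=f(a_1,\dots,a_n)\cdot I_m\quad\text{for all } a_1,\dots,a_n\in F.$$
   Context: Equivalently, the Clifford algebra $C_f=F\langle x_1,\dots,x_n : (a_1x_1+\dots+a_nx_n)^d=f(a_1,\dots,a_n)\ \forall a_1,\dots,a_n\in F\rangle$ has a homomorphic image inside a matrix algebra of finite degree over $F$. *)

From mathcomp Require Import all_boot all_algebra.
From mathcomp Require Export mpoly.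
Set Implicit Arguments. Unset Strict Implicit. Unset Printing Implicit Defensive.
Import GRing.Theory.
Local Open Scope ring_scope.

Definition infinite_field (F : fieldType) : Prop :=
  forall s : seq F, exists x : F, x \notin s.

From mathcomp Require Import all_boot all_algebra all_field.
From mathcomp Require Import mpoly ring zify mxtens.
Set Implicit Arguments. Unset Strict Implicit. Unset Printing Implicit Defensive.
Import GRing.Theory.
Local Open Scope ring_scope.

(* If w commutes with u and v and v u = w u v, then (u + v)^d expands by the
   q-binomial theorem with Gaussian binomials [d, j]_w as coefficients. These
   are integer polynomials in w divisible by the cyclotomic polynomial Phi_d,
   since they vanish at the primitive d-th roots of unity; so for w a matrix
   annihilated by Phi_d, (u + v)^d = u^d + v^d. Taking u = y ⊗ B and
   v = x ⊗ A, where A and B are clock and shift matrices with A^d = B^d = 1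
   and A B = w B A, shows that a sum of linearizable forms is linearizable
   (x and y linearizing the summands). A monomial c a_{i_1} ... a_{i_d} is
   linearized by a weighted cyclic shift, whose d-th power is the scalar
   product of its weights. *)

Section GaussianBinomial.
Variable R : pzRingType.

Fixpoint qbinom (q : R) (n k : nat) : R :=
  match n, k with
  | 0, 0 => 1
  | 0, _ => 0
  | n'.+1, 0 => 1
  | n'.+1, k'.+1 => qbinom q n' k'.+1 + q ^+ (n' - k') * qbinom q n' k'
  end.

Lemma qbinomn0 q n : qbinom q n 0 = 1. Proof. by case: n. Qed.

Lemma qbinom_small q n k : (n < k)%N -> qbinom q n k = 0.
Proof. by elim: n k => [|n IH] [|k] //= lt_nk; rewrite !IH ?mulr0 ?addr0 //; lia. Qed.

Lemma qbinomnn q n : qbinom q n n = 1.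
Proof. by elim: n => //= n IH; rewrite qbinom_small // IH subnn expr0 mulr1 add0r. Qed.

End GaussianBinomial.

Lemma qbinom_morph (R1 R2 : pzRingType) (f : R1 -> R2) :
  f 0 = 0 -> f 1 = 1 -> {morph f : x y / x + y} -> {morph f : x y / x * y} ->
  forall q n k, f (qbinom q n k) = qbinom (f q) n k.
Proof.
move=> f0 f1 fD fM q; have fX e : f (q ^+ e) = f q ^+ e.
  by elim: e => [|e IH]; rewrite ?expr0 ?f1 // !exprS fM IH.
by elim=> [|n IH] [|k] //=; rewrite fD fM fX !IH.
Qed.

Lemma rmorph_qbinom (R1 R2 : pzRingType) (f : {rmorphism R1 -> R2}) q n k :
  f (qbinom q n k) = qbinom (f q) n k.
Proof. exact: qbinom_morph (rmorph0 f) (rmorph1 f) (rmorphD f) (rmorphM f) q n k. Qed.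

Lemma qbinom_ratio (R : comPzRingType) (q : R) n k :
  (1 - q ^+ k.+1) * qbinom q n k.+1 = (1 - q ^+ (n - k)) * qbinom q n k.
Proof.
elim: n k => [|n IH] k.
  by rewrite /= sub0n expr0 subrr mul0r; case: k => [|k] /=; rewrite mulr0.
case: k => [|j].
  rewrite /= !subn0 qbinomn0 mulr1 mulrDr IH subn0 qbinomn0 mulr1.
  rewrite !exprS expr0; ring.
have [lt_jn|le_nj] := ltnP j n; last first.
  rewrite (@qbinom_small _ q n.+1 j.+2) ?mulr0; last by lia.
  by rewrite (_ : (n.+1 - j.+1 = 0)%N) ?expr0 ?subrr ?mul0r //; lia.
have [e def_n] : exists e, n = (j + e.+1)%N by exists (n - j.+1)%N; lia.
have := IH j.+1; have := IH j; rewrite /= subSS def_n.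
have [-> ->] : (j + e.+1 - j.+1 = e)%N /\ (j + e.+1 - j = e.+1)%N by lia.
move=> IHj IHj1; rewrite mulrDr IHj1 mulrDr [(1 - q ^+ e.+1) * (_ * _)]mulrCA -IHj !exprS; ring.
Qed.

Lemma qbinom_prim_root_eq0 (R : idomainType) (z : R) d j :
  d.-primitive_root z -> (0 < j < d)%N -> qbinom z d j = 0.
Proof.
move=> prim_z; elim: j => [//|j IH] lt_jd.
have := qbinom_ratio z d j.
have -> : (1 - z ^+ (d - j)) * qbinom z d j = 0.
  case: j IH lt_jd => [|j] IH lt_jd; first by rewrite subn0 prim_expr_order // subrr mul0r.
  by rewrite IH ?mulr0 //; lia.
move/eqP; rewrite mulf_eq0 subr_eq0 => /orP[|/eqP //].
rewrite eq_sym -(prim_order_dvd prim_z) => /dvdn_leq; lia.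
Qed.

Section QCommuting.
Variable R : pzRingType.
Variables u v w : R.
Hypotheses (wu : w * u = u * w) (wv : w * v = v * w) (vu : v * u = w * (u * v)).

Lemma exprv_mulu m : v ^+ m * u = w ^+ m * (u * v ^+ m).
Proof.
elim: m => [|m IH]; first by rewrite !expr0 !mul1r mulr1.
rewrite exprSr -mulrA vu mulrA -(commrX m wv) -mulrA (mulrA (v ^+ m)) IH.
by rewrite exprS !mulrA.
Qed.

Lemma comm_qbinom x : GRing.comm w x -> forall n k, GRing.comm x (qbinom w n k).
Proof.
move=> wx; elim=> [|n IH] [|k] /=; try exact: commr1; try exact: commr0.
apply: commrD; first exact: IH.
by apply: commrM; [apply/commrX/commr_sym|apply: IH].
Qed.

Lemma qbinom_exprD n :
  (u + v) ^+ n = \sum_(j < n.+1) qbinom w n j * (u ^+ j * v ^+ (n - j)).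
Proof.
elim: n => [|n IH]; first by rewrite big_ord1 /= !expr0 !mulr1.
have mulu : \sum_(i < n.+1) qbinom w n i * (u ^+ i * v ^+ (n - i)) * u =
  \sum_(i < n.+1) w ^+ (n - i) * qbinom w n i * (u ^+ i.+1 * v ^+ (n - i)).
  apply: eq_bigr => i _; rewrite -!mulrA exprv_mulu.
  have uw : GRing.comm (u ^+ i) (w ^+ (n - i)).
    by apply/commrX/commr_sym/commrX.
  have qw : GRing.comm (qbinom w n i) (w ^+ (n - i)).
    by apply/commrX/commr_sym/comm_qbinom/commr_refl.
  by rewrite !mulrA -(mulrA _ (u ^+ i)) uw mulrA qw exprSr !mulrA.
have mulv : \sum_(i < n.+1) qbinom w n i * (u ^+ i * v ^+ (n - i)) * v =
  v ^+ n.+1 + \sum_(i < n.+1) qbinom w n i.+1 * (u ^+ i.+1 * v ^+ (n - i)).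
  rewrite big_ord_recl [in RHS]big_ord_recr /= qbinomn0 qbinom_small // mul0r addr0.
  rewrite subn0 expr0 !mul1r -exprSr; congr (_ + _); apply: eq_bigr => i _.
  by rewrite /bump /= add1n -!mulrA -exprSr subnSK.
rewrite exprSr IH mulrDr !mulr_suml mulu mulv [RHS]big_ord_recl qbinomn0 expr0 mul1r subn0.
have pascal (i : 'I_n.+1) :
    qbinom w n.+1 (bump 0 i) * (u ^+ bump 0 i * v ^+ (n.+1 - bump 0 i)) =
    qbinom w n i.+1 * (u ^+ i.+1 * v ^+ (n - i)) +
    w ^+ (n - i) * qbinom w n i * (u ^+ i.+1 * v ^+ (n - i)).
  by rewrite /bump /= add1n subSS mulrDl.
rewrite (eq_bigr _ (fun i _ => pascal i)) big_split /= mul1r [LHS]addrC.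
by rewrite addrA.
Qed.

Lemma qcomm_exprD d :
  (forall j, (0 < j < d.+1)%N -> qbinom w d.+1 j = 0) ->
  (u + v) ^+ d.+1 = u ^+ d.+1 + v ^+ d.+1.
Proof.
move=> qbinom0; rewrite qbinom_exprD.
rewrite -(big_mkord xpredT (fun j => qbinom w d.+1 j * (u ^+ j * v ^+ (d.+1 - j)))).
rewrite big_nat_recr // big_nat_recl // big_nat_cond big1 => [|j]; last first.
  by rewrite andbT => lt_jd; rewrite qbinom0 ?mul0r.
rewrite qbinomn0 qbinomnn subn0 subnn !expr0 !mul1r mulr1.
by rewrite /= addr0 addrC.
Qed.

End QCommuting.

Lemma Cyclotomic_dvd_qbinom d j : (0 < j < d)%N ->
  exists r : {poly int}, qbinom 'X d j = r * 'Phi_d.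
Proof.
move=> lt0jd; have d_gt0 : (0 < d)%N by lia.
have [z prim_z] := C_prim_root_exists d_gt0.
suff : 'Phi_d %| qbinom 'X d j.
  case/dvdpP_int => r; rewrite zprimitive_monic ?Cyclotomic_monic // => ->.
  by exists r; rewrite mulrC.
rewrite -dvdp_rat_int -(dvdp_map (ratr : {rmorphism rat -> algC})) -!map_poly_comp.
rewrite !(eq_map_poly (ratr_int algC)) (Cintr_Cyclotomic prim_z).
rewrite (rmorph_qbinom (map_poly (intr : int -> algC))) /= map_polyX /cyclotomic -big_filter.
rewrite -(big_map (fun k : 'I_d => z ^+ k) xpredT (fun x => 'X - x%:P)).
apply: uniq_roots_dvdp.
  apply/allP => x /mapP[k]; rewrite mem_filter => /andP[coprime_kd _] ->.
  rewrite /root -horner_evalE rmorph_qbinom /= horner_evalE hornerX.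
  by rewrite qbinom_prim_root_eq0 // prim_root_exp_coprime.
rewrite uniq_rootsE map_inj_in_uniq ?filter_uniq ?index_enum_uniq // => k l _ _ /eqP.
by rewrite (eq_prim_root_expr prim_z) !modn_small // => /eqP/val_inj.
Qed.

Lemma Cyclotomic_dvd_Xn_sub1 d : (0 < d)%N -> exists r : {poly int}, 'X^d - 1 = r * 'Phi_d.
Proof.
move=> d_gt0; rewrite -(prod_Cyclotomic d_gt0) (big_rem d) -?dvdn_divisors //.
by exists (\prod_(k <- rem d (divisors d)) 'Phi_k); rewrite /= mulrC.
Qed.

Lemma qbinom_root_mx_exists (R : comNzRingType) d : (0 < d)%N ->
  exists r (C : 'M[R]_r.+1),
    C ^+ d = 1 /\ forall j, (0 < j < d)%N -> qbinom C d j = 0.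
Proof.
move=> d_gt0; pose p := map_poly (intr : int -> R) 'Phi_d.
have monic_p : p \is monic by rewrite monic_map ?Cyclotomic_monic.
have [r [C pC0]] : exists r (C : 'M[R]_r.+1), horner_mx C p = 0.
  have : (0 < (size p).-1)%N.
    rewrite size_map_poly_id0 ?size_Cyclotomic ?totient_gt0 //.
    by rewrite (monicP (Cyclotomic_monic d)) rmorph1 oner_eq0.
  move: (companionmx p) (companionmxK monic_p); case: (size p).-1 => // r C charC _.
  by exists r, C; rewrite -charC Cayley_Hamilton.
have evalC (q : {poly int}) : horner_mx C (map_poly intr (q * 'Phi_d)) = 0.
  by rewrite !rmorphM /= -/p pC0 mulr0.
exists r, C; split.
  have [q Eq] := Cyclotomic_dvd_Xn_sub1 d_gt0.
  apply/eqP; rewrite -subr_eq0; have := evalC q.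
  by rewrite -Eq !rmorphB !rmorph1 !rmorphXn /= map_polyX horner_mx_X => ->.
move=> j lt0jd; have [q Eq] := Cyclotomic_dvd_qbinom lt0jd.
rewrite -(evalC q) -Eq (rmorph_qbinom (map_poly (intr : int -> R))) /=.
by rewrite rmorph_qbinom map_polyX /= horner_mx_X.
Qed.

Section Tensor.
Variable R : comPzRingType.

Lemma tensmxDl m n p q (A1 A2 : 'M[R]_(m, n)) (B : 'M[R]_(p, q)) :
  (A1 + A2) *t B = A1 *t B + A2 *t B.
Proof. by apply/matrixP => i j; rewrite !mxE mulrDl. Qed.

Lemma tensmxDr m n p q (A : 'M[R]_(m, n)) (B1 B2 : 'M[R]_(p, q)) :
  A *t (B1 + B2) = A *t B1 + A *t B2.
Proof. by apply/matrixP => i j; rewrite !mxE mulrDr. Qed.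

Lemma tensmxZl m n p q a (A : 'M[R]_(m, n)) (B : 'M[R]_(p, q)) :
  (a *: A) *t B = a *: (A *t B).
Proof. by apply/matrixP => i j; rewrite !mxE mulrA. Qed.

Lemma tensmxZr m n p q a (A : 'M[R]_(m, n)) (B : 'M[R]_(p, q)) :
  A *t (a *: B) = a *: (A *t B).
Proof. by apply/matrixP => i j; rewrite !mxE mulrCA. Qed.

Lemma tensmx_suml m n p q (I : Type) (r : seq I) (P : pred I)
    (A : I -> 'M[R]_(m, n)) (B : 'M[R]_(p, q)) :
  \sum_(i <- r | P i) A i *t B = (\sum_(i <- r | P i) A i) *t B.
Proof. by rewrite (big_morph (fun A => A *t B) (fun A1 A2 => tensmxDl A1 A2 B) (tens0mx B)). Qed.

Lemma tensmx_sumr m n p q (I : Type) (r : seq I) (P : pred I)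
    (A : 'M[R]_(m, n)) (B : I -> 'M[R]_(p, q)) :
  \sum_(i <- r | P i) A *t B i = A *t \sum_(i <- r | P i) B i.
Proof. by rewrite (big_morph (fun B => A *t B) (tensmxDr A) (tensmx0 A)). Qed.

Lemma tensmx_scalar m p (a b : R) :
  (a%:M : 'M[R]_m) *t (b%:M : 'M[R]_p) = (a * b)%:M.
Proof.
apply/matrixP => i j.
case: (mxtens_indexP i) => i1 i2; case: (mxtens_indexP j) => j1 j2.
rewrite tensmxE !mxE (inj_eq (can_inj (@mxtens_indexK _ _))) xpair_eqE.
by case: (i1 == j1); case: (i2 == j2); rewrite ?mulr1n ?mulr0n ?mulr0 ?mul0r.
Qed.

Lemma tensmxX m p (A : 'M[R]_m) (B : 'M[R]_p) k :
  (A *t B) ^+ k = (A ^+ k) *t (B ^+ k).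
Proof.
elim: k => [|k IH]; first by rewrite !expr0 tensmx_scalar mulr1.
by rewrite !exprS IH -!mulmxE tensmx_mul.
Qed.

Lemma tens1mx_qbinom m p (M : 'M[R]_m) k j :
  qbinom ((1%:M : 'M[R]_p) *t M) k j = 1%:M *t qbinom M k j.
Proof.
symmetry; apply: (qbinom_morph (f := fun N : 'M[R]_m => (1%:M : 'M[R]_p) *t N)).
- exact: tensmx0.
- by rewrite tensmx_scalar mulr1.
- exact: tensmxDr.
- by move=> N N'; rewrite -!mulmxE tensmx_mul mul1mx.
Qed.

End Tensor.

Section CyclicShift.
Variables (R : comPzRingType) (d' : nat).
Local Notation d := d'.+1.

Definition wshift (lam : 'I_d -> R) : 'M[R]_d :=
  \matrix_(i, j) ((i == (j + 1) %% d :> nat)%N%:R * lam j).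

Lemma wshiftX lam k : wshift lam ^+ k =
  \matrix_(i, j) ((i == (j + k) %% d :> nat)%N%:R *
                  \prod_(t < k) lam (inZp (j + t)%N)).
Proof.
elim: k => [|k IH].
  by apply/matrixP => i j; rewrite expr0 !mxE big_ord0 mulr1 addn0 modn_small.
apply/matrixP => i j; rewrite exprS IH -mulmxE !mxE.
rewrite (bigD1 (inZp (j + k)%N)) //= big1 ?addr0 => [|l /negbTE neq_l]; last first.
  rewrite !mxE; have -> : (l == (j + k) %% d :> nat)%N = false.
    by apply: contraFF neq_l => /eqP eq_l; apply/eqP/val_inj.
  by rewrite mul0r mulr0.
rewrite !mxE eqxx mul1r big_ord_recr /= modnDml -addnA addn1.
by rewrite -mulrA [lam _ * _]mulrC.
Qed.

Lemma wshift_expr_order lam : wshift lam ^+ d = (\prod_t lam t)%:M.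
Proof.
rewrite wshiftX; apply/matrixP => i j; rewrite !mxE modnDr modn_small //.
rewrite -val_eqE /=; case: (i == j :> nat); rewrite ?mul0r ?mulr0n // mul1r mulr1n.
symmetry; apply: (reindex_inj (h := fun t : 'I_d => inZp (j + t)%N)).
move=> x y /(congr1 val) /= /eqP; rewrite eqn_modDl !modn_small //.
by move/eqP/val_inj.
Qed.

Lemma sum_scale_wshift (I : finType) (a : I -> R) (lam : I -> 'I_d -> R) :
  \sum_i a i *: wshift (lam i) = wshift (fun t => \sum_i a i * lam i t).
Proof.
apply/matrixP => i j; rewrite summxE !mxE mulr_sumr; apply: eq_bigr => l _.
by rewrite !mxE mulrCA.
Qed.

Lemma wshift1E : wshift (fun _ => 1) = \matrix_(i, j) (i == ordS j)%:R.
Proof. by apply/matrixP => i j; rewrite !mxE mulr1 -val_eqE /= addn1. Qed.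

Lemma delta_mx_mul_shift (j : 'I_d) :
  delta_mx j j *m wshift (fun _ => 1) = delta_mx j (ord_pred j).
Proof.
apply/matrixP => i k; rewrite wshift1E mxE (bigD1 j) //= big1 ?addr0 => [|l /negbTE neq_lj].
  by rewrite !mxE eqxx andbT [j == _]eq_sym (can2_eq (@ordSK d) (@ord_predK d)) -natrM mulnb.
by rewrite !mxE neq_lj andbF mul0r.
Qed.

Lemma shift_mul_delta_mx (j : 'I_d) :
  wshift (fun _ => 1) *m delta_mx j j = delta_mx (ordS j) j.
Proof.
apply/matrixP => i k; rewrite wshift1E mxE (bigD1 j) //= big1 ?addr0 => [|l /negbTE neq_lj].
  by rewrite !mxE eqxx -natrM mulnb.
by rewrite !mxE eq_sym neq_lj mulr0.
Qed.

Variable r : nat.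

Definition blkdiag_mx (M : 'I_d -> 'M[R]_r) : 'M[R]_(d * r) :=
  \sum_j delta_mx j j *t M j.

Lemma blkdiag_mx_const M : blkdiag_mx (fun _ => M) = 1%:M *t M.
Proof. by rewrite /blkdiag_mx tensmx_suml -mx1_sum_delta. Qed.

Lemma blkdiag_mxM M N :
  blkdiag_mx M * blkdiag_mx N = blkdiag_mx (fun j => M j * N j).
Proof.
rewrite -mulmxE mulmx_suml; apply: eq_bigr => j _.
rewrite mulmx_sumr (bigD1 j) //= big1 ?addr0 => [|l neq_lj].
  by rewrite tensmx_mul mul_delta_mx mulmxE.
by rewrite tensmx_mul mul_delta_mx_cond eq_sym (negbTE neq_lj) mulr0n tens0mx.
Qed.

Lemma blkdiag_mxX M k : blkdiag_mx M ^+ k = blkdiag_mx (fun j => M j ^+ k).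
Proof.
elim: k => [|k IH].
  by rewrite expr0 (blkdiag_mx_const 1) tensmx_scalar mulr1.
by rewrite exprSr IH blkdiag_mxM; apply: eq_bigr => j _; rewrite exprSr.
Qed.

Variable C : 'M[R]_r.

Definition shift_mx : 'M[R]_(d * r) := wshift (fun _ => 1) *t 1%:M.
Definition clock_mx : 'M[R]_(d * r) := blkdiag_mx (fun j => C ^+ j).
Definition phase_mx : 'M[R]_(d * r) := 1%:M *t C.

Lemma phase_shiftC : phase_mx * shift_mx = shift_mx * phase_mx.
Proof. by rewrite -!mulmxE !tensmx_mul !mul1mx !mulmx1. Qed.

Lemma phase_clockC : phase_mx * clock_mx = clock_mx * phase_mx.
Proof.
rewrite /phase_mx -blkdiag_mx_const !blkdiag_mxM.
by apply: eq_bigr => j _; rewrite -exprS -exprSr.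
Qed.

Lemma shift_mx_order : shift_mx ^+ d = 1%:M.
Proof.
by rewrite tensmxX wshift_expr_order big1 // expr1n tensmx_scalar mulr1.
Qed.

Hypothesis C_order : C ^+ d = 1.

Lemma clock_mx_order : clock_mx ^+ d = 1%:M.
Proof.
rewrite blkdiag_mxX (_ : blkdiag_mx _ = blkdiag_mx (fun _ => 1)).
  by rewrite blkdiag_mx_const tensmx_scalar mulr1.
by apply: eq_bigr => j _; rewrite -exprM [(j * d)%N]mulnC exprM C_order expr1n.
Qed.

Lemma clock_shift : clock_mx * shift_mx = phase_mx * (shift_mx * clock_mx).
Proof.
rewrite -!mulmxE mulmx_suml !mulmx_sumr (reindex_inj (@ordS_inj d)).
apply: eq_bigr => j _; rewrite !tensmx_mul mulmx1 mul1mx.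
rewrite delta_mx_mul_shift shift_mul_delta_mx (@ordSK d) mul1mx mulmxE -exprS.
by rewrite /= expr_mod.
Qed.

End CyclicShift.

Section Linearization.
Variables (R : comNzRingType) (n d' : nat).
Local Notation d := d'.+1.

(* Sizes are only required positive, as tensor products have size m1 * m2. *)
Definition linearizable (g : ('I_n -> R) -> R) : Prop :=
  exists m (X : 'I_n -> 'M[R]_m),
    (0 < m)%N /\ forall a, (\sum_i a i *: X i) ^+ d = (g a)%:M.

Lemma eq_linearizable g h : g =1 h -> linearizable g -> linearizable h.
Proof. by move=> eq_gh [m [X [m_gt0 eX]]]; exists m, X; split => // a; rewrite eX eq_gh. Qed.

Lemma linearizable0 : linearizable (fun _ => 0).
Proof.
exists 1%N, (fun _ => 0); split => // a.
by rewrite big1 => [|i _]; rewrite ?scaler0 // expr0n /= [RHS]raddf0.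
Qed.

Lemma linearizableD g h :
  linearizable g -> linearizable h -> linearizable (fun a => g a + h a).
Proof.
move=> [m1 [X [m1_gt0 eX]]] [m2 [Y [m2_gt0 eY]]].
have [r [C [C_order qbinomC0]]] := qbinom_root_mx_exists R (ltn0Sn d').
pose A := clock_mx d' C; pose B := shift_mx R d' r.+1; pose W := phase_mx d' C.
pose Z i := (X i *t (1%:M : 'M_m2)) *t A + ((1%:M : 'M_m1) *t Y i) *t B.
exists (m1 * m2 * (d * r.+1))%N, Z; split; first by rewrite !muln_gt0 m1_gt0 m2_gt0.
move=> a; set x := \sum_i a i *: X i; set y := \sum_i a i *: Y i.
have -> : \sum_i a i *: Z i = (1%:M *t y) *t B + (x *t 1%:M) *t A.
  under eq_bigr do rewrite scalerDr -3!tensmxZl -tensmxZr.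
  by rewrite big_split /= addrC !tensmx_suml tensmx_sumr.
set U := _ *t B; set V := _ *t A; pose Q := (1%:M : 'M_(m1 * m2)) *t W.
have QU : Q * U = U * Q.
  by rewrite -!mulmxE !tensmx_mul !mul1mx !mulmx1.
have QV : Q * V = V * Q.
  by rewrite -!mulmxE !tensmx_mul !mul1mx !mulmx1 !mulmxE phase_clockC.
have VU : V * U = Q * (U * V).
  by rewrite -!mulmxE !tensmx_mul !mul1mx !mulmx1 !mulmxE clock_shift.
rewrite (qcomm_exprD QU QV VU) => [|j lt0jd]; last first.
  by rewrite !tens1mx_qbinom qbinomC0 // !tensmx0.
rewrite [U ^+ d]tensmxX [V ^+ d]tensmxX shift_mx_order clock_mx_order //.
rewrite !tensmxX eX eY -!rmorphXn !expr1n.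
by rewrite !tensmx_scalar !mulr1 !mul1r -raddfD addrC.
Qed.

Lemma linearizable_scaled_prod (c : R) (v : 'I_d -> 'I_n) :
  linearizable (fun a => c * \prod_t a (v t)).
Proof.
pose w (t : 'I_d) := if t == ord0 then c else 1.
exists d, (fun i => wshift (fun t => if v t == i then w t else 0)); split => // a.
rewrite sum_scale_wshift wshift_expr_order; congr (_ %:M).
have pick_var t : \sum_i a i * (if v t == i then w t else 0) = w t * a (v t).
  rewrite (bigD1 (v t)) //= eqxx big1 ?addr0 1?mulrC // => i neq_i.
  by rewrite eq_sym (negbTE neq_i) mulr0.
rewrite (eq_bigr _ (fun t _ => pick_var t)) big_split /= (bigD1 ord0) //= big1 ?mulr1 //.
by move=> t /negbTE; rewrite /w => ->.
Qed.

Lemma linearizable_monomial (c : R) (e : 'X_{1..n}) :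
  mdeg e = d -> linearizable (fun a => c * \prod_i a i ^+ e i).
Proof.
rewrite mdegE => deg_e.
have [i0 _|n0] := pickP (fun _ : 'I_n => true); last by move: deg_e; rewrite big_pred0.
pose s := flatten [seq nseq (e i) i | i <- enum 'I_n].
have size_s : size s = d.
  rewrite size_flatten /shape -map_comp sumnE big_map -deg_e big_enum /=.
  by apply: eq_bigr => i _; rewrite size_nseq.
apply: eq_linearizable (linearizable_scaled_prod c (fun t => nth i0 s t)) => a.
have -> : \prod_(t < d) a (nth i0 s t) = \prod_(x <- s) a x.
  by rewrite (big_nth i0) big_mkord size_s.
rewrite big_flatten big_map big_enum; congr (_ * _).
by apply: eq_bigr => i _; rewrite big_nseq iter_mulr_1.
Qed.

Lemma homog_linearizable (f : {mpoly R[n]}) :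
  f \is d.-homog -> linearizable (fun a => f.@[a]).
Proof.
rewrite dhomogE => /allP homog_f.
apply: (@eq_linearizable (fun a => \sum_(e <- msupp f) f@_e * \prod_i a i ^+ e i)).
  by move=> a; rewrite mevalE.
elim: (msupp f) homog_f => [|e s IH] homog_s.
  by apply: eq_linearizable linearizable0 => a; rewrite big_nil.
apply: (@eq_linearizable (fun a => f@_e * \prod_i a i ^+ e i +
    \sum_(e' <- s) f@_e' * \prod_i a i ^+ e' i)) => [a|]; first by rewrite big_cons.
apply: linearizableD; first by apply/linearizable_monomial/eqP/homog_s; rewrite mem_head.
by apply: IH => e' s_e'; apply: homog_s; rewrite in_cons s_e' orbT.
Qed.

End Linearization.

Unset Implicit Arguments.
Theorem mainTheorem1 (F : fieldType) (d n : nat) (f : {mpoly F[n]}) :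
  infinite_field F -> (0 < d)%N ->
  ((forall p : nat, p \in [pchar F] -> ~~ (p %| d)%N) \/ (prime d /\ d \in [pchar F])) ->
  f \is d.-homog ->
  exists (m : nat) (X : 'I_n -> 'M[F]_m.+1),
    forall a : 'I_n -> F,
      (\sum_(i < n) a i *: X i) ^+ d = (f.@[a])%:M.
Proof.
move=> _ d_gt0 _; case: d d_gt0 => [//|d'] _ /homog_linearizable.
by case=> [[|m] [X [//= _ eX]]]; exists m, X.
Qed.
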